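(* For an integer $n\geq 0$ and $z\in\mathbb{C}$, let $$\mathcal{T}_n(z) := \sum_{m=0}^n \binom{n}{m} m^m\,(n-m+z)^{n-m}$$ (with $0^0\equiv 1$). Then $$\mathcal{T}_n(z) = \sum_{k=0}^n a_k\, (z+ n +1)^k, \qquad a_k = \binom{n}{k}\,\mathcal{T}_{n-k}(k-n-1) = \binom{n}{k}\, d_{n-k},$$ where $d_j := \mathcal{T}_j(-j-1)$ for integers $j\geq 0$.
   Context: Convention: $0^0\equiv1$. The numbers $d_j=\mathcal{T}_j(-j-1)$ are the values of $\mathcal{T}_j$ at $-j-1$. *)

From mathcomp Require Import all_boot all_order all_algebra.
Set Implicit Arguments. Unset Strict Implicit. Unset Printing Implicit Defensive.
Import Order.TTheory GRing.Theory Num.Theory.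
Local Open Scope ring_scope.

(* T_n(z) = sum_{m=0}^n C(n,m) m^m (n-m+z)^(n-m), with 0^0 = 1
   (automatic: x ^+ 0 = 1 in MathComp). *)
Definition calT (R : numClosedFieldType) (n : nat) (z : R) : R :=
  \sum_(0 <= m < n.+1) ('C(n, m))%:R * (m%:R) ^+ m * ((n - m)%:R + z) ^+ (n - m).

Definition dval (R : numClosedFieldType) (j : nat) : R :=
  calT j (- (j%:R) - 1).

From mathcomp Require Import all_boot all_order all_algebra.
From mathcomp Require Import ring zify.
Import Order.TTheory GRing.Theory Num.Theory.
Local Open Scope ring_scope.

(* Put [w := z + n + 1], so that [n - m + z = w - (m + 1)].  Expanding
   [(w - (m + 1)) ^ (n - m)] binomially and exchanging the two sums, the
   identity [C(n, m) C(n - m, k) = C(n, k) C(n - k, m)] turns the coefficient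
   of [w ^ k] into [C(n, k)] times a sum in which [(-(m + 1)) ^ (n - k - m)]
   appears; this is [T_(n-k)] at the point [k - n - 1], since there
   [(n - k - m) + (k - n - 1) = -(m + 1)]. *)

Lemma bin_mul_bin_fact n m k : (m + k <= n)%N ->
  ('C(n, m) * 'C(n - m, k) * (m`! * k`! * (n - m - k)`!) = n`!)%N.
Proof.
move=> le_mk_n.
rewrite -(@bin_fact n m); last lia.
rewrite -(@bin_fact (n - m) k); last lia.
ring.
Qed.

Lemma bin_mul_bin_eq0 n m k : (n < m + k)%N -> ('C(n, m) * 'C(n - m, k) = 0)%N.
Proof.
move=> lt_n_mk; case: (leqP m n) => [le_mn | lt_nm]; last by rewrite bin_small.
by rewrite (@bin_small (n - m) k) ?muln0 //; lia.
Qed.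

Lemma bin_mul_binC n m k : ('C(n, m) * 'C(n - m, k) = 'C(n, k) * 'C(n - k, m))%N.
Proof.
case: (leqP (m + k) n) => [le_mk_n | lt_n_mk]; last first.
  by rewrite !bin_mul_bin_eq0 // addnC.
have facts_gt0 : (0 < m`! * k`! * (n - m - k)`!)%N by rewrite !muln_gt0 !fact_gt0.
apply/eqP; rewrite -(eqn_pmul2r facts_gt0) bin_mul_bin_fact //.
have -> : (m`! * k`! * (n - m - k)`! = k`! * m`! * (n - k - m)`!)%N.
  by rewrite subnAC [(m`! * _)%N]mulnC.
by rewrite bin_mul_bin_fact // addnC.
Qed.

Lemma big_nat_widen0 (V : nmodType) n1 n2 (F : nat -> V) : (n1 <= n2)%N ->
  (forall i, (n1 <= i)%N -> F i = 0) ->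
  \sum_(0 <= i < n1) F i = \sum_(0 <= i < n2) F i.
Proof.
move=> le_n12 F0; rewrite (@big_cat_nat _ _ _ n1 0 n2) //=.
rewrite [X in _ + X]big_nat_cond [X in _ + X]big1 ?addr0 // => i.
by case/andP=> /andP[/F0].
Qed.

Lemma exprDn_widen (R : comPzRingType) (a b : R) j n : (j <= n)%N ->
  (a + b) ^+ j = \sum_(0 <= i < n.+1) ('C(j, i))%:R * a ^+ (j - i) * b ^+ i.
Proof.
move=> le_jn; rewrite -(@big_nat_widen0 _ j.+1 n.+1) //; last first.
  by move=> i lt_ji; rewrite bin_small // !mul0r.
rewrite exprDn big_mkord; apply: eq_bigr => i _.
by rewrite -mulrA mulr_natl.
Qed.

Section Expansion.

Variables (R : numClosedFieldType) (n : nat).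

Lemma calT_expand (z : R) : calT n z =
  \sum_(0 <= m < n.+1) \sum_(0 <= k < n.+1)
    ('C(n, m) * 'C(n - m, k))%:R * m%:R ^+ m
      * (- (m%:R + 1)) ^+ (n - m - k) * (z + n%:R + 1) ^+ k.
Proof.
rewrite /calT; apply: eq_big_nat => m /andP[_ lt_mn].
have -> : (n - m)%:R + z = - (m%:R + 1) + (z + n%:R + 1) :> R.
  by rewrite natrB; [ring | lia].
rewrite (@exprDn_widen _ _ _ _ n) ?leq_subr // big_distrr.
by apply: eq_big_nat => k _; rewrite natrM /=; ring.
Qed.

Lemma calT_at_shift k : (k <= n)%N -> calT (n - k) (k%:R - n%:R - 1 : R) =
  \sum_(0 <= m < n.+1) ('C(n - k, m))%:R * m%:R ^+ m * (- (m%:R + 1)) ^+ (n - k - m).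
Proof.
move=> le_kn; rewrite /calT.
rewrite -[RHS](@big_nat_widen0 _ (n - k).+1 n.+1) ?ltnS ?leq_subr //; last first.
  by move=> m lt_nkm; rewrite bin_small // !mul0r.
apply: eq_big_nat => m /andP[_ le_m_nk]; congr (_ * _ ^+ _).
by rewrite !natrB; [ring | lia | lia].
Qed.

Lemma calT_at_shift_dval k : (k <= n)%N ->
  calT (n - k) (k%:R - n%:R - 1 : R) = dval R (n - k).
Proof. by move=> le_kn; rewrite /dval natrB //; congr (calT _ _); ring. Qed.

End Expansion.

Theorem proposition4 (R : numClosedFieldType) (n : nat) (z : R) :
  calT n z =
    \sum_(0 <= k < n.+1) ('C(n, k))%:R * calT (n - k) (k%:R - n%:R - 1)
                          * (z + n%:R + 1) ^+ k
  /\ (forall k : nat, (k <= n)%N ->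
        ('C(n, k))%:R * calT (n - k) (k%:R - n%:R - 1) = ('C(n, k))%:R * dval R (n - k)).
Proof.
split; last by move=> k le_kn; rewrite calT_at_shift_dval.
rewrite calT_expand exchange_big_nat; apply: eq_big_nat => k /andP[_ lt_kn].
rewrite calT_at_shift // big_distrr big_distrl; apply: eq_big_nat => m _ /=.
by rewrite bin_mul_binC natrM subnAC; ring.
Qed.
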